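(* If $X$ is a locally finite simplicial set, then the ring $\mathbb Z^{(X)}$ is $s$-unital: for every finite family $\phi_1,\dots,\phi_n\in\mathbb Z^{(X)}$ there exists $\mu\in\mathbb Z^{(X)}$ with $\phi_i\mu=\mu\phi_i=\phi_i$ for all $i$.
   Context: $\mathbb Z^{\Delta^n}=\mathbb Z[t_0,\dots,t_n]/(t_0+\dots+t_n-1)$ forms a simplicial ring; $\mathbb Z^X=\hom_{\mathrm{sSet}}(X,\mathbb Z^{\Delta^\bullet})$ with pointwise multiplication; the support of $\phi$ is the simplicial subset generated by the simplices on which $\phi$ is nonzero; $\mathbb Z^{(X)}$ is the ideal of elements with finite support. $X$ is locally finite if every simplex is a face of only finitely many nondegenerate simplices (i.e. for each $\sigma$, finitely many nondegenerate $\tau$ with $\langle\tau\rangle\supset\langle\sigma\rangle$). *)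

From HB Require Import structures.
From mathcomp Require Import all_boot all_order all_algebra.
From Stdlib Require Import List.
Set Implicit Arguments. Unset Strict Implicit. Unset Printing Implicit Defensive.
Import Order.TTheory GRing.Theory Num.Theory.
Local Open Scope ring_scope.

(** * Integer polynomials in [n] variables t_0, ..., t_(n-1), as iterated
    univariate polynomials: mpoly n.+1 = (mpoly n)[t_n]. *)
Fixpoint mpoly (n : nat) : comNzRingType :=
  match n with
  | 0 => int
  | k.+1 => {poly mpoly k} : comNzRingType
  end.

(** the variable t_i in mpoly n (garbage 0 if i >= n) *)
Fixpoint mvar (n : nat) (i : nat) : mpoly n :=
  match n return mpoly n with
  | 0 => 0
  | k.+1 => if i == k then ('X : {poly mpoly k}) else ((mvar k i)%:P : {poly mpoly k})
  end.

Fixpoint meval (S : comNzRingType) (v : nat -> S) (n : nat) : mpoly n -> S :=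
  match n return mpoly n -> S with
  | 0 => fun p => (p : int)%:~R
  | k.+1 => fun p =>
      \sum_(j < size (p : {poly mpoly k})) meval v (p : {poly mpoly k})`_j * v k ^+ j
  end.

(** * The simplicial ring Z^{Delta^n} = Z[t_0,...,t_n]/(t_0+...+t_n - 1).
    Elements are represented by polynomials in mpoly n.+1; [eqD n p q]
    is equality in the quotient ring. *)
Definition eqD (n : nat) (p q : mpoly n.+1) : Prop :=
  exists r : mpoly n.+1, p - q = (\sum_(i < n.+1) mvar n.+1 i - 1) * r.

Definition pullD (m n : nat) (f : 'I_m.+1 -> 'I_n.+1) (p : mpoly n.+1) : mpoly m.+1 :=
  meval (fun j : nat => \sum_(i < m.+1 | (f i : nat) == j) mvar m.+1 i) p.

(** * Simplicial sets, as contravariant functors on the simplex category.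
    A morphism [m] -> [n] of Delta is a monotone map 'I_m.+1 -> 'I_n.+1. *)
Definition monotone (m n : nat) (f : 'I_m -> 'I_n) : Prop :=
  forall i j : 'I_m, (i <= j)%N -> (f i <= f j)%N.

Record sSet := SSet {
  sob :> nat -> Type;
  sact : forall m n : nat, ('I_m.+1 -> 'I_n.+1) -> sob n -> sob m;
  sact_id : forall n (x : sob n), sact (fun i => i) x = x;
  sact_comp : forall m n k (f : 'I_m.+1 -> 'I_n.+1) (g : 'I_n.+1 -> 'I_k.+1)
      (x : sob k), monotone f -> monotone g ->
      sact f (sact g x) = sact (fun i => g (f i)) x
}.

(** the simplex [y] is a face (iterated, possibly degenerate) of [x],
    i.e. y lies in the simplicial subset generated by x *)
Definition is_face (X : sSet) (m n : nat) (y : X m) (x : X n) : Prop :=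
  exists f : 'I_m.+1 -> 'I_n.+1, monotone f /\ y = sact f x.

(** degenerate: image of a simplex of lower dimension under a structure map
    (equivalently, in the image of some degeneracy s_i) *)
Definition degenerate (X : sSet) (n : nat) (x : X n) : Prop :=
  exists (k : nat) (y : X k) (g : 'I_n.+1 -> 'I_k.+1),
    (k < n)%N /\ monotone g /\ x = sact g y.

Definition nondegenerate (X : sSet) (n : nat) (x : X n) : Prop :=
  ~ degenerate x.

Definition locally_finite (X : sSet) : Prop :=
  forall (m : nat) (s : X m), exists L : list {n : nat & X n},
    forall (n : nat) (t : X n), nondegenerate t -> is_face s t ->
      In (existT (fun k => X k) n t) L.

(** * Z^X = hom_sSet(X, Z^{Delta^.}), represented by families of
    representatives, compatible with the simplicial structure
    (up to equality in the quotient rings). *)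
Record ZX (X : sSet) := MkZX {
  zfam :> forall n : nat, X n -> mpoly n.+1;
  zcompat : forall m n (f : 'I_m.+1 -> 'I_n.+1) (x : X n), monotone f ->
      eqD (zfam (sact f x)) (pullD f (zfam x))
}.

Definition in_support (X : sSet) (phi : ZX X) (m : nat) (z : X m) : Prop :=
  exists (n : nat) (x : X n), ~ eqD (phi n x) 0 /\ is_face z x.

(** phi lies in Z^(X): its support is finite, i.e. has finitely many
    nondegenerate simplices *)
Definition finite_support (X : sSet) (phi : ZX X) : Prop :=
  exists L : list {n : nat & X n},
    forall (m : nat) (z : X m), nondegenerate z -> in_support phi z ->
      In (existT (fun k => X k) m z) L.

From Pilot Require Import Defs.
From HB Require Import structures.
From mathcomp Require Import all_boot all_order all_algebra ring.
From Stdlib Require Import List ClassicalEpsilon Classical FunctionalExtensionality.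
Set Implicit Arguments. Unset Strict Implicit.
Import GRing.Theory.
Local Open Scope ring_scope.

(* For a set Q of vertices of X, the "vertex indicator" mu_Q assigns to an
   n-simplex x the element  sum_{j : vertex j of x lies in Q} t_j  of
   Z^{Delta^n}; this family is compatible with the simplicial structure, so
   mu_Q lies in Z^X.  Take Q to be the set of vertices lying in the support of
   some phi_i.  If phi_i(x) is nonzero, all vertices of x lie in Q, so
   mu_Q(x) = t_0 + ... + t_n = 1 in Z^{Delta^n}; if phi_i(x) = 0 both products
   vanish.  Hence phi_i mu_Q = mu_Q phi_i = phi_i.  Finally, Q is finite
   (each phi_i has finite support) and a simplex on which mu_Q is nonzero has
   a vertex in Q; writing it as a degeneracy of a nondegenerate simplex y,
   the simplex y is a nondegenerate coface of that vertex.  Local finiteness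
   bounds the possible y, and each y has finitely many nondegenerate faces,
   so mu_Q has finite support. *)

Section Evaluation.
Variables (S : comNzRingType) (v : nat -> S).

Lemma meval0 k : meval v (0 : mpoly k) = 0.
Proof. by case: k => [|k] //=; rewrite size_poly0 big_ord0. Qed.

Lemma meval_widen k (p : mpoly k.+1) N : (size (p : {poly mpoly k}) <= N)%N ->
  meval v p = \sum_(j < N) meval v (p : {poly mpoly k})`_j * v k ^+ j.
Proof.
move=> hN /=.
rewrite (big_ord_widen N (fun j => meval v (p : {poly mpoly k})`_j * v k ^+ j)) //.
rewrite big_mkcond /=; apply: eq_bigr => i _.
case: ifP => // /negbT; rewrite -leqNgt => hi.
by rewrite seq.nth_default // meval0 mul0r.
Qed.

Lemma mevalD k (p q : mpoly k) : meval v (p + q) = meval v p + meval v q.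
Proof.
elim: k p q => [|k IH] p q; first by rewrite /= intrD.
set N := maxn (size (p : {poly mpoly k})) (size (q : {poly mpoly k})).
rewrite (@meval_widen k (p + q) N); last exact: size_polyD.
rewrite (@meval_widen k p N) ?leq_maxl // (@meval_widen k q N) ?leq_maxr //.
by rewrite -big_split /=; apply: eq_bigr => i _; rewrite coefD IH mulrDl.
Qed.

Lemma meval_sum k (I : finType) (P : pred I) (F : I -> mpoly k) :
  meval v (\sum_(i | P i) F i) = \sum_(i | P i) meval v (F i).
Proof. exact: (big_morph _ (@mevalD k) (meval0 k)). Qed.

Lemma mevalC k (c : mpoly k) :
  meval v ((c%:P : {poly mpoly k}) : mpoly k.+1) = meval v c.
Proof.
rewrite (@meval_widen k _ 1); last by rewrite size_polyC leq_b1.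
by rewrite big_ord1 coefC /= expr0 mulr1.
Qed.

Lemma meval1 k : meval v (1 : mpoly k) = 1.
Proof. by elim: k => [|k IH] //; rewrite -polyC1 mevalC IH. Qed.

Lemma mevalX k i : (i < k)%N -> meval v (mvar k i) = v i.
Proof.
elim: k => [|k IH] //= hi; case: eqP => [->|ne].
  rewrite -/(meval v (n:=k.+1) _) (@meval_widen k _ 2); last by rewrite size_polyX.
  by rewrite big_ord_recr big_ord1 /= !coefX /= meval0 meval1 mul0r add0r expr1 mul1r.
rewrite -/(meval v (n:=k.+1) _) mevalC IH //.
by move: hi; rewrite ltnS leq_eqVlt => /orP [/eqP|].
Qed.
End Evaluation.

Lemma eqD_mul_sum_vars n (p : mpoly n.+1) :
  eqD (p * \sum_(j < n.+1) mvar n.+1 j) p /\ eqD ((\sum_(j < n.+1) mvar n.+1 j) * p) p.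
Proof. by split; exists p; ring. Qed.

Lemma eqD0_mul n (p q : mpoly n.+1) : eqD p 0 -> eqD (p * q) p /\ eqD (q * p) p.
Proof.
move=> [r]; rewrite subr0 => ->.
by split; exists (r * q - r); ring.
Qed.

Definition decide (P : Prop) : bool :=
  if excluded_middle_informative P then true else false.

Lemma decideP (P : Prop) : reflect P (decide P).
Proof. by rewrite /decide; case: excluded_middle_informative => h; constructor. Qed.

Lemma monotone_const m n (j : 'I_n) : monotone (fun _ : 'I_m => j).
Proof. by []. Qed.

Lemma monotone_comp m n p (f : 'I_m -> 'I_n) (g : 'I_n -> 'I_p) :
  monotone f -> monotone g -> monotone (fun i => g (f i)).
Proof. by move=> hf hg i j hij; apply/hg/hf. Qed.

Definition vertex (X : sSet) n (j : 'I_n.+1) (x : X n) : X 0 :=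
  sact (fun _ : 'I_1 => j) x.
Arguments vertex {X n} j x.

Lemma vertex_sact (X : sSet) m n (f : 'I_m.+1 -> 'I_n.+1) (x : X n) j :
  monotone f -> vertex j (sact f x) = vertex (f j) x.
Proof. by move=> hf; rewrite /vertex sact_comp //; apply: monotone_const. Qed.

Lemma vertex_is_face (X : sSet) n (j : 'I_n.+1) (x : X n) : is_face (vertex j x) x.
Proof. by exists (fun _ => j); split; first exact: monotone_const. Qed.

Lemma is_face_trans (X : sSet) m n p (z : X m) (y : X n) (x : X p) :
  is_face z y -> is_face y x -> is_face z x.
Proof.
move=> [f [hf ->]] [g [hg ->]].
by exists (fun i => g (f i)); split; [exact: monotone_comp | rewrite sact_comp].
Qed.

(* Vertices are nondegenerate.  ([Defs.nondegenerate] is qualified because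
   MathComp's [nondegenerate] for sesquilinear forms shadows it.) *)
Lemma vertex_nondegenerate (X : sSet) (v : X 0) : Defs.nondegenerate v.
Proof. by move=> [k [y [g [hk _]]]]. Qed.

Lemma degeneracy_of_nondegenerate (X : sSet) n (x : X n) :
  exists k (y : X k), Defs.nondegenerate y /\ is_face x y.
Proof.
elim/ltn_ind: n x => n IH x.
case: (classic (degenerate x)) => [[k [y [g [hk [hg ->]]]]]|nd].
  have [k' [y' [nd' hy]]] := IH k hk y.
  exists k', y'; split => //; apply: is_face_trans hy.
  by exists g; split.
by exists n, x; split => //; exists (fun i => i); split => //; rewrite sact_id.
Qed.

Lemma vertex_in_support (X : sSet) (phi : ZX X) n (x : X n) (j : 'I_n.+1) :
  ~ eqD (phi n x) 0 -> in_support phi (vertex j x).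
Proof. by move=> hne; exists n, x; split => //; apply: vertex_is_face. Qed.

Section VertexIndicator.
Variables (X : sSet) (Q : X 0 -> Prop).

Definition indicator_fam {n} (x : X n) : mpoly n.+1 :=
  \sum_(j < n.+1 | decide (Q (vertex j x))) mvar n.+1 j.

(* Pulling back along f regroups the sum by the fibres of f. *)
Lemma indicator_compat m n (f : 'I_m.+1 -> 'I_n.+1) (x : X n) : monotone f ->
  eqD (indicator_fam (sact f x)) (pullD f (indicator_fam x)).
Proof.
move=> hf; exists 0; rewrite mulr0; apply/eqP; rewrite subr_eq0; apply/eqP.
rewrite /pullD /indicator_fam meval_sum.
under [RHS]eq_bigr => j _ do rewrite mevalX //.
rewrite (partition_big f (fun j => decide (Q (vertex j x)))) /=; last first.
  by move=> i; rewrite vertex_sact.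
apply: eq_bigr => j hj; apply: eq_bigl => i; rewrite vertex_sact //.
case: (eqVneq (f i) j) => [->|ne]; first by rewrite hj eqxx.
by rewrite andbF; apply/esym/negbTE.
Qed.

Definition vertex_indicator : ZX X := MkZX indicator_compat.

Lemma indicator_full {n} (x : X n) : (forall j, Q (vertex j x)) ->
  vertex_indicator n x = \sum_(j < n.+1) mvar n.+1 j.
Proof. by move=> hQ; apply: eq_bigl => j; apply/decideP. Qed.

Lemma indicator_nonzero {n} (x : X n) :
  ~ eqD (vertex_indicator n x) 0 -> exists j, Q (vertex j x).
Proof.
move=> hne; apply: NNPP => hno; apply: hne; exists 0; rewrite mulr0 subr0 /=.
rewrite /indicator_fam big_mkcond big1 // => j _.
by case: decideP => // hj; case: hno; exists j.
Qed.

Lemma indicator_support m (z : X m) : in_support vertex_indicator z ->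
  exists (v : X 0) n (y : X n),
    [/\ Q v, Defs.nondegenerate y, is_face v y & is_face z y].
Proof.
move=> [n [x [hne hzx]]].
have [j hj] := indicator_nonzero hne.
have [k [y [ndy hxy]]] := degeneracy_of_nondegenerate x.
exists (vertex j x), k, y; split => //; apply: is_face_trans hxy.
  exact: vertex_is_face.
exact: hzx.
Qed.
End VertexIndicator.

Lemma In_mem (T : eqType) (x : T) (s : list T) : x \in s -> List.In x s.
Proof. by elim: s => //= a s IH; rewrite seq.in_cons => /orP [/eqP ->|/IH]; auto. Qed.

Lemma finite_union (A I : Type) (s : list I) (R : I -> A -> Prop) :
  (forall i, exists L, forall a, R i a -> List.In a L) ->
  exists L, forall i, List.In i s -> forall a, R i a -> List.In a L.
Proof.
move=> H; elim: s => [|i s [L HL]]; first by exists nil.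
have [Li HLi] := H i.
exists (Li ++ L)%list => j /= [<-|hj] a hR; apply: List.in_or_app; auto.
by right; apply: HL hj a hR.
Qed.
Arguments finite_union {A I} s R.

(* A simplex has finitely many nondegenerate faces: they are images under
   maps [m] -> [n] with m <= n. *)
Lemma nondegenerate_faces_finite (X : sSet) n (y : X n) :
  exists L : list {m : nat & X m}, forall m (z : X m),
    Defs.nondegenerate z -> is_face z y -> List.In (existT _ m z) L.
Proof.
exists (List.flat_map (fun m => List.map
     (fun f : {ffun 'I_m.+1 -> 'I_n.+1} => existT (fun k => X k) m (sact f y))
     (enum {ffun 'I_m.+1 -> 'I_n.+1})) (List.seq 0 n.+1)).
move=> m z nd [f [hf ez]]; subst z.
have hm : (m <= n)%N.
  by rewrite leqNgt; apply/negP => hlt; apply: nd; exists n, y, f.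
apply/List.in_flat_map; exists m; split.
  by apply/List.in_seq; split; apply/leP.
apply/List.in_map_iff; exists (finfun f); split; last by apply: In_mem; rewrite mem_enum.
by congr existT; congr sact; apply: functional_extensionality => i; rewrite ffunE.
Qed.

Lemma faces_of_cofaces_finite (X : sSet) (hX : locally_finite X) m0 (v : X m0) :
  exists L : list {m : nat & X m}, forall m (z : X m) n (y : X n),
    Defs.nondegenerate y -> is_face v y -> Defs.nondegenerate z -> is_face z y ->
    List.In (existT _ m z) L.
Proof.
have [C HC] := hX m0 v.
case: (finite_union C (fun (c a : {m : nat & X m}) =>
  let (n, y) := c in let (m, z) := a in Defs.nondegenerate z /\ is_face z y))
  => [[n y]|L HL].
  have [L HL] := nondegenerate_faces_finite y.
  by exists L => [[m z] [nd hz]]; apply: HL.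
by exists L => m z n y ndy hvy ndz hzy; apply: (HL (existT _ n y)) => //; apply: HC.
Qed.

Lemma indicator_finite_support (X : sSet) (hX : locally_finite X)
    (Q : X 0 -> Prop) (LQ : list {m : nat & X m}) :
  (forall v, Q v -> List.In (existT _ 0 v) LQ) ->
  finite_support (vertex_indicator Q).
Proof.
move=> hQ.
case: (finite_union LQ (fun (c a : {m : nat & X m}) =>
  let (m0, v) := c in let (m, z) := a in exists n (y : X n),
    [/\ Defs.nondegenerate y, is_face v y, Defs.nondegenerate z & is_face z y]))
  => [[m0 v]|L HL].
  have [L HL] := faces_of_cofaces_finite hX v.
  by exists L => [[m z] [n [y [ndy hvy ndz hzy]]]]; apply: (HL m z n y).
exists L => m z ndz /indicator_support [v [n [y [Qv ndy hvy hzy]]]].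
by apply: (HL (existT _ 0 v)); [apply: hQ | exists n, y].
Qed.

Theorem proposition9p7 (X : sSet) (hX : locally_finite X)
    (k : nat) (phi : 'I_k -> ZX X)
    (hphi : forall i, finite_support (phi i)) :
  exists mu : ZX X, finite_support mu /\
    forall (i : 'I_k) (n : nat) (x : X n),
      eqD (phi i n x * mu n x) (phi i n x) /\
      eqD (mu n x * phi i n x) (phi i n x).
Proof.
pose Q (v : X 0) := exists i : 'I_k, in_support (phi i) v.
exists (vertex_indicator Q); split.
- case: (finite_union (enum 'I_k) (fun i (a : {m : nat & X m}) =>
    let (m, z) := a in Defs.nondegenerate z /\ in_support (phi i) z))
    => [i|LQ HLQ].
    have [L HL] := hphi i.
    by exists L => [[m z] [nd hs]]; apply: HL.
  apply: (indicator_finite_support hX (LQ := LQ)) => v [i hi].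
  apply: (HLQ i _ (existT _ 0 v)); first by apply: In_mem; rewrite mem_enum.
  by split; first exact: vertex_nondegenerate.
- move=> i n x.
  case: (classic (eqD (phi i n x) 0)) => [h0|hne]; first exact: eqD0_mul.
  rewrite indicator_full; first exact: eqD_mul_sum_vars.
  by move=> j; exists i; apply: vertex_in_support.
Qed.
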